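(* For any simple undirected graph $G$, $$n_G(\mathcal{L}_5)=\sum_{\{st,uv\}\in Q}\Big(\sum_{w\in\Gamma(s)\setminus\{s,t,u,v\}}(a_{uw}+a_{vw})+\sum_{w\in\Gamma(t)\setminus\{s,t,u,v\}}(a_{uw}+a_{vw})\Big).$$
   Context: $a_{ij}$ are the adjacency matrix entries, $\Gamma(x)$ is the neighbourhood of $x$. $Q$ is the set of unordered pairs $\{st,uv\}$ of edges with $s,t,u,v$ pairwise distinct. $n_G(F)$ is the number of (not necessarily induced) subgraphs isomorphic to $F$; $\mathcal{L}_5$ is the path on 5 vertices. *)

(* A simple graph is a symmetric irreflexive relation adj on a finType T. *)
From mathcomp Require Import all_boot.
Set Implicit Arguments. Unset Strict Implicit. Unset Printing Implicit Defensive.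

Section Graph.
Variables (T : finType) (adj : rel T).

Definition edges : {set {set T}} :=
  [set e : {set T} | [exists x, exists y, adj x y && (e == [set x; y])]].

Definition path5_edges (f : {ffun 'I_5 -> T}) : {set {set T}} :=
  [set [set f (inord i); f (inord i.+1)] | i : 'I_4].

(* n_G(L_5): number of subgraphs of G isomorphic to the path on 5 vertices.
   Since L_5 has no isolated vertices such a subgraph is determined by its edge set,
   which must be the edge set of some injective labelling of L_5 and be contained in E(G). *)
Definition n_L5 : nat :=
  #|[set S : {set {set T}} | (S \subset edges) &&
      [exists f : {ffun 'I_5 -> T}, injectiveb f && (S == path5_edges f)]]|.

Definition Q : {set {set {set T}}} :=
  [set q : {set {set T}} | [exists e1 in edges, exists e2 in edges,
      [disjoint e1 & e2] && (q == [set e1; e2])]].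

(* for an edge pair {st,uv}:
   sum_{w in Γ(s)\{s,t,u,v}} (a_uw + a_vw) + sum_{w in Γ(t)\{s,t,u,v}} (a_uw + a_vw),
   with e1 = {s,t}, e2 = {u,v} *)
Definition pair_term (e1 e2 : {set T}) : nat :=
  \sum_(x in e1) \sum_(w | adj x w && (w \notin e1 :|: e2)) \sum_(y in e2) (adj y w : nat).

Definition fst_of (q : {set {set T}}) : {set T} := odflt set0 [pick e in q].
Definition snd_of (q : {set {set T}}) : {set T} := odflt set0 [pick e in q :\ fst_of q].

End Graph.

From mathcomp Require Import all_boot.
Set Implicit Arguments. Unset Strict Implicit. Unset Printing Implicit Defensive.

(* Twice either side counts the labellings of L_5 in G: injective maps from
   the path 0 - 1 - 2 - 3 - 4 into T sending consecutive vertices to adjacent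
   ones.  Each copy of L_5 in G has exactly two labellings, f and its
   reversal.  A labelling a - b - w - d - c amounts to an ordered pair of
   disjoint edges {a,b}, {c,d} with marked endpoints b and d, plus a common
   neighbour w of b and d outside both edges; this is the summand of the
   right-hand side, and ordering the pair of edges doubles the sum. *)

Lemma set2_eq (U : finType) (a b c d : U) :
  [set a; b] = [set c; d] -> (a = c /\ b = d) \/ (a = d /\ b = c).
Proof.
move=> E.
have ha : a \in [set c; d] by rewrite -E !inE eqxx.
have hb : b \in [set c; d] by rewrite -E !inE eqxx orbT.
have hc : c \in [set a; b] by rewrite E !inE eqxx.
have hd : d \in [set a; b] by rewrite E !inE eqxx orbT.
rewrite !inE in ha hb hc hd.
case/orP: ha => /eqP ha; case/orP: hb => /eqP hb; subst; (try by left); (try by right).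
- by move: hd; rewrite orbb => /eqP ->; right.
- by move: hc; rewrite orbb => /eqP ->; left.
Qed.

Lemma disjoint_set2 (U : finType) (a b c d : U) :
  [disjoint [set a; b] & [set c; d]] = [&& a != c, a != d, b != c & b != d].
Proof.
apply/idP/idP.
- move=> hd.
  have ha : a \in [set a; b] by rewrite !inE eqxx.
  have hb : b \in [set a; b] by rewrite !inE eqxx orbT.
  move: (disjointFr hd ha) (disjointFr hd hb); rewrite !inE.
  by case/norP => -> -> /norP[-> ->].
- case/and4P => ac ad bc bd; apply/pred0P => x /=; rewrite !inE.
  apply/negbTE/negP => /andP[/orP[]/eqP-> /orP[]/eqP E]; subst;
    by rewrite eqxx in ac ad bc bd.
Qed.

Lemma fst_snd_of_set2 (U : finType) (e1 e2 : {set U}) : e1 != e2 ->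
  (fst_of [set e1; e2] = e1 /\ snd_of [set e1; e2] = e2) \/
  (fst_of [set e1; e2] = e2 /\ snd_of [set e1; e2] = e1).
Proof.
move=> ne; rewrite /snd_of /fst_of; case: pickP => [f hf | none]; last first.
  by have := none e1; rewrite !inE eqxx.
case: pickP => [s hs | none] /=.
  move: hf hs; rewrite !inE => /orP[]/eqP-> /andP[hsf /orP[]/eqP hs]; subst;
    rewrite ?eqxx in hsf => //; [by left | by right].
move: hf; rewrite !inE => /orP[]/eqP hf; subst.
- by have := none e2; rewrite !inE eq_sym ne eqxx orbT.
- by have := none e1; rewrite !inE ne eqxx.
Qed.

Local Notation o k := (inord k : 'I_5).

Lemma ord5_ind (P : 'I_5 -> Prop) :
  P (o 0) -> P (o 1) -> P (o 2) -> P (o 3) -> P (o 4) -> forall i, P i.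
Proof.
move=> P0 P1 P2 P3 P4 i; rewrite -(inord_val i).
by case: i => -[|[|[|[|[|i]]]]].
Qed.

Lemma enum_ord5 : enum 'I_5 = [:: o 0; o 1; o 2; o 3; o 4].
Proof. by apply: (inj_map val_inj); rewrite val_enum_ord /= !inordK. Qed.

Lemma rev_ord5 k : k < 5 -> rev_ord (o k) = o (4 - k).
Proof. by move=> lt_k5; apply: val_inj; rewrite /= !inordK // ltnS leq_subr. Qed.

Lemma nat_path5_cases (a b c d e : nat) : a < 5 -> b < 5 -> c < 5 -> d < 5 -> e < 5 ->
  [==> uniq [:: a; b; c; d; e],
  (a.+1 == b) || (b.+1 == a), (b.+1 == c) || (c.+1 == b),
  (c.+1 == d) || (d.+1 == c) , (d.+1 == e) || (e.+1 == d) =>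
  [&& a == 0, b == 1, c == 2, d == 3 & e == 4] || [&& a == 4, b == 3, c == 2, d == 1 & e == 0]].
Proof.
by case: a => [|[|[|[|[|a]]]]] //; case: b => [|[|[|[|[|b]]]]] //; case: c => [|[|[|[|[|c]]]]] //;
 case: d => [|[|[|[|[|d]]]]] //; case: e => [|[|[|[|[|e]]]]].
Qed.

Lemma ord5_path_perm (s : 'I_5 -> 'I_5) : injective s ->
  (forall k, k < 4 -> ((s (o k)).+1 == s (o k.+1)) || ((s (o k.+1)).+1 == s (o k))) ->
  s =1 id \/ s =1 @rev_ord 5.
Proof.
move=> s_inj s_step.
have := nat_path5_cases (ltn_ord (s (o 0))) (ltn_ord (s (o 1))) (ltn_ord (s (o 2)))
  (ltn_ord (s (o 3))) (ltn_ord (s (o 4))).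
rewrite !s_step //.
have -> : uniq [:: val (s (o 0)); val (s (o 1)); val (s (o 2)); val (s (o 3)); val (s (o 4))].
  have vs_inj : injective (fun i => val (s i)) by move=> i j /val_inj /s_inj.
  by rewrite (map_inj_uniq vs_inj [:: o 0; o 1; o 2; o 3; o 4]) -enum_ord5 enum_uniq.
move=> /= /orP[] /and5P[/eqP s0 /eqP s1 /eqP s2 /eqP s3 /eqP s4]; [left | right];
  apply: ord5_ind; apply: val_inj; rewrite /= ?inordK //= ?s0 ?s1 ?s2 ?s3 ?s4.
Qed.

Section Path5Labellings.
Variable T : finType.
Implicit Types f g : {ffun 'I_5 -> T}.

Lemma path5_edgesE f : path5_edges f =
  [set [set f (o 0); f (o 1)]; [set f (o 1); f (o 2)];
       [set f (o 2); f (o 3)]; [set f (o 3); f (o 4)]].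
Proof.
apply/setP => S; apply/imsetP/idP.
- by case=> -[[|[|[|[|i]]]] lt_i4] //= _ ->; rewrite !inE eqxx ?orbT.
- rewrite !inE => /orP[/orP[/orP[]|]|] /eqP ->.
  + by exists (inord 0); rewrite // inordK.
  + by exists (inord 1); rewrite // inordK.
  + by exists (inord 2); rewrite // inordK.
  + by exists (inord 3); rewrite // inordK.
Qed.

Lemma injectiveb5 f : injectiveb f = uniq [:: f (o 0); f (o 1); f (o 2); f (o 3); f (o 4)].
Proof. by rewrite /injectiveb /dinjectiveb enum_ord5. Qed.

Definition path5_rev f : {ffun 'I_5 -> T} := [ffun i => f (rev_ord i)].

Lemma path5_edges_rev f : path5_edges (path5_rev f) = path5_edges f.
Proof.
have edge_rev (i : 'I_4) : [set path5_rev f (inord i); path5_rev f (inord i.+1)] =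
                           [set f (inord (rev_ord i)); f (inord (rev_ord i).+1)].
  have lt_i4 := ltn_ord i.
  rewrite setUC !ffunE; congr [set f _; f _]; apply: val_inj;
    rewrite /= !inordK ?subnSK // ?ltnS ?leq_subr //; last exact: ltnW.
  exact: leq_trans (leq_subr i 4) _.
apply/setP => S; apply/imsetP/imsetP => -[i _ ->].
- by exists (rev_ord i); rewrite ?edge_rev.
- by exists (rev_ord i); rewrite ?edge_rev ?rev_ordK.
Qed.

Lemma injectiveb_path5_rev f : injectiveb (path5_rev f) = injectiveb f.
Proof.
apply/injectiveP/injectiveP => f_inj i j.
- by move=> fij; apply: rev_ord_inj; apply: f_inj; rewrite !ffunE !rev_ordK.
- by rewrite !ffunE => /f_inj /rev_ord_inj.
Qed.

Lemma path5_rev_neq f : injectiveb f -> path5_rev f != f.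
Proof.
move=> /injectiveP f_inj; apply/eqP => /ffunP /(_ (o 0)).
by rewrite ffunE rev_ord5 // => /f_inj /(congr1 val); rewrite /= !inordK.
Qed.

Lemma path5_edges_codom f g : path5_edges g = path5_edges f -> forall k, exists j, g k = f j.
Proof.
move=> Egf; have in_codom k S : S \in path5_edges g -> g k \in S -> exists j, g k = f j.
  by rewrite Egf => /imsetP[i _ ->]; rewrite !inE => /orP[]/eqP->; eexists.
apply: ord5_ind.
- by apply: (in_codom _ [set g (o 0); g (o 1)]); rewrite ?path5_edgesE !inE eqxx ?orbT.
- by apply: (in_codom _ [set g (o 0); g (o 1)]); rewrite ?path5_edgesE !inE eqxx ?orbT.
- by apply: (in_codom _ [set g (o 1); g (o 2)]); rewrite ?path5_edgesE !inE eqxx ?orbT.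
- by apply: (in_codom _ [set g (o 2); g (o 3)]); rewrite ?path5_edgesE !inE eqxx ?orbT.
- by apply: (in_codom _ [set g (o 3); g (o 4)]); rewrite ?path5_edgesE !inE eqxx ?orbT.
Qed.

Lemma path5_edges_eq f g : injectiveb f -> injectiveb g ->
  path5_edges g = path5_edges f -> g = f \/ g = path5_rev f.
Proof.
move=> /injectiveP f_inj /injectiveP g_inj Egf.
have [s gfs] := fin_all_exists (path5_edges_codom Egf).
have s_inj : injective s by move=> i j sij; apply: g_inj; rewrite !gfs sij.
have s_step k : k < 4 -> ((s (o k)).+1 == s (o k.+1)) || ((s (o k.+1)).+1 == s (o k)).
  move=> lt_k4; have : [set g (o k); g (o k.+1)] \in path5_edges f.
    by rewrite -Egf; apply/imsetP; exists (inord k); rewrite // inordK.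
  case/imsetP => j _; have lt_j4 := ltn_ord j.
  by rewrite !gfs => /set2_eq[[/f_inj-> /f_inj->]|[/f_inj-> /f_inj->]];
    rewrite /= !inordK ?eqxx ?orbT //; apply: leqW.
by case: (ord5_path_perm s_inj s_step) => s_eq; [left | right];
  apply/ffunP => i; rewrite ?ffunE gfs s_eq.
Qed.

Definition bridged_path (a b c d w : T) : {ffun 'I_5 -> T} :=
  [ffun i : 'I_5 => nth a [:: a; b; w; d; c] i].

Lemma sum_ffun5_bridged (F : {ffun 'I_5 -> T} -> nat) :
  \sum_(f : {ffun 'I_5 -> T}) F f =
  \sum_(a : T) \sum_(b : T) \sum_(c : T) \sum_(d : T) \sum_(w : T) F (bridged_path a b c d w).
Proof.
under eq_bigr => a _ do under eq_bigr => b _ do under eq_bigr => c _ do rewrite pair_big /=.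
under eq_bigr => a _ do under eq_bigr => b _ do rewrite pair_big /=.
under eq_bigr => a _ do rewrite pair_big /=.
rewrite pair_big /=.
pose h (u : T * (T * (T * (T * T)))) := bridged_path u.1 u.2.1 u.2.2.1 u.2.2.2.1 u.2.2.2.2.
pose h_inv f := (f (o 0), (f (o 1), (f (o 4), (f (o 3), f (o 2))))).
rewrite (reindex h) //; exists h_inv => [[a [b [c [d w]]]] _ | f _].
- by rewrite /h_inv /h /bridged_path !ffunE !inordK.
- by apply/ffunP; apply: ord5_ind; rewrite /h_inv /h /bridged_path ffunE /= inordK.
Qed.

End Path5Labellings.

Section Graph.
Variables (T : finType) (adj : rel T).
Hypotheses (adj_sym : symmetric adj) (adj_irr : irreflexive adj).
Implicit Types f g : {ffun 'I_5 -> T}.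

Lemma mem_edges2 x y : ([set x; y] \in edges adj) = adj x y.
Proof.
apply/idP/idP => [|xy].
- rewrite inE => /existsP[u /existsP[v /andP[uv /eqP /set2_eq]]].
  by case=> -[-> ->] //; rewrite adj_sym.
- by rewrite inE; apply/existsP; exists x; apply/existsP; exists y; rewrite xy eqxx.
Qed.

Lemma adj_neq x y : adj x y -> x != y.
Proof. by apply: contraTneq => ->; rewrite adj_irr. Qed.

Lemma edgesP e : e \in edges adj -> exists x y, adj x y /\ e = [set x; y].
Proof. by rewrite inE => /existsP[x /existsP[y /andP[xy /eqP ->]]]; exists x, y. Qed.

Lemma edges_disjoint_neq (e1 e2 : {set T}) : e1 \in edges adj -> [disjoint e1 & e2] -> e1 != e2.
Proof.
case/edgesP => x [y [_ ->]] dis; apply: contraTneq dis => <-.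
by apply/negP => /pred0P/(_ x); rewrite /= !inE eqxx.
Qed.

Lemma mem_QP q : q \in Q adj -> exists e1 e2,
  [/\ e1 \in edges adj, e2 \in edges adj, [disjoint e1 & e2] & q = [set e1; e2]].
Proof.
rewrite inE => /existsP[e1 /andP[e1E /existsP[e2 /andP[e2E /andP[dis /eqP ->]]]]].
by exists e1, e2.
Qed.

(* An edge with a marked endpoint b is an ordered pair (a, b) of adjacent vertices. *)
Lemma sum_edges_endpoints (F : {set T} -> T -> nat) :
  \sum_(e in edges adj) \sum_(x in e) F e x =
  \sum_(a : T) \sum_(b : T) adj a b * F [set a; b] b.
Proof.
pose A := [set p : T * T | adj p.1 p.2].
pose h (p : T * T) := ([set p.1; p.2], p.2).
have h_inj : {in A &, injective h}.
  move=> [a b] [c d] _ _ [/set2_eq E db]; subst d.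
  by case: E => -[-> bc] //; rewrite bc.
rewrite pair_big_dep /=.
transitivity (\sum_(u in h @: A) F u.1 u.2).
  apply: eq_bigl => -[e x] /=; apply/idP/imsetP.
  - case/andP => /edgesP[a [b [ab ->]]]; rewrite !inE => /orP[]/eqP->.
    + by exists (b, a); rewrite ?inE /h /= 1?adj_sym // setUC.
    + by exists (a, b); rewrite ?inE.
  - by case=> -[a b]; rewrite inE /h /= => ab [-> ->]; rewrite mem_edges2 ab !inE eqxx orbT.
rewrite big_imset //= pair_big /= big_mkcond /=; apply: eq_bigr => -[a b] _ /=.
by rewrite inE /=; case: (adj a b); rewrite ?mul1n ?mul0n.
Qed.

Lemma pair_termE e1 e2 : pair_term adj e1 e2 =
  \sum_(x in e1) \sum_(y in e2) \sum_(w : T) (adj x w && (w \notin e1 :|: e2) && adj y w : nat).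
Proof.
rewrite /pair_term; apply: eq_bigr => x _; rewrite big_mkcond [RHS]exchange_big /=.
by apply: eq_bigr => w _; case: (adj x w && _); rewrite //= big1.
Qed.

Lemma pair_termC e1 e2 : pair_term adj e1 e2 = pair_term adj e2 e1.
Proof.
rewrite !pair_termE [RHS]exchange_big /=; apply: eq_bigr => x _; apply: eq_bigr => y _.
apply: eq_bigr => w _; rewrite setUC -!andbA.
by case: (adj x w); case: (adj y w); rewrite ?andbF.
Qed.

Definition path5_labellings : {set {ffun 'I_5 -> T}} :=
  [set f : {ffun 'I_5 -> T} | injectiveb f && (path5_edges f \subset edges adj)].

Lemma path5_edges_sub f : (path5_edges f \subset edges adj) =
  [&& adj (f (o 0)) (f (o 1)), adj (f (o 1)) (f (o 2)),
      adj (f (o 2)) (f (o 3)) & adj (f (o 3)) (f (o 4))].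
Proof. by rewrite path5_edgesE !subUset !sub1set !mem_edges2 -!andbA. Qed.

Lemma path5_rev_labellings f : (path5_rev f \in path5_labellings) = (f \in path5_labellings).
Proof. by rewrite !inE injectiveb_path5_rev path5_edges_rev. Qed.

Lemma path5_labellings_fibre f : f \in path5_labellings ->
  [set g in path5_labellings | path5_edges g == path5_edges f] = [set f; path5_rev f].
Proof.
move=> fL; have f_inj : injectiveb f by move: fL; rewrite inE => /andP[].
apply/setP => g; rewrite [in LHS]inE in_set2.
apply/andP/orP => [[gL /eqP Egf] | [] /eqP ->]; last 2 first.
- by [].
- by rewrite path5_rev_labellings path5_edges_rev.
have g_inj : injectiveb g by move: gL; rewrite inE => /andP[].
by case: (path5_edges_eq f_inj g_inj Egf) => ->; rewrite eqxx; [left | right].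
Qed.

Lemma card_path5_labellings : #|path5_labellings| = 2 * n_L5 adj.
Proof.
have -> : n_L5 adj = #|(@path5_edges T) @: path5_labellings|.
  apply: eq_card => S; rewrite !inE; apply/andP/imsetP.
  - by case=> sub /existsP[f /andP[fi /eqP E]]; exists f; rewrite // inE fi -E sub.
  - by case=> f; rewrite inE => /andP[fi sub] ->; split=> //; apply/existsP; exists f; rewrite fi eqxx.
rewrite -sum1_card (partition_big_imset (@path5_edges T)) /= mulnC -sum_nat_const.
apply: eq_bigr => S /imsetP[f fL ->]; rewrite -big_set /= path5_labellings_fibre //.
rewrite sum1_card cards2 eq_sym path5_rev_neq //.
by move: fL; rewrite inE => /andP[].
Qed.

Lemma bridged_path_labellings a b c d w :
  (bridged_path a b c d w \in path5_labellings) =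
  [&& adj a b, adj c d, [disjoint [set a; b] & [set c; d]]
    & adj b w && (w \notin [set a; b] :|: [set c; d]) && adj d w].
Proof.
rewrite inE injectiveb5 path5_edges_sub /bridged_path !ffunE /= !inordK //.
rewrite disjoint_set2 /= !inE !negb_or (adj_sym w d) (adj_sym d c).
apply/idP/idP.
- case/andP => /andP[/and4P[ab aw ad ac] /andP[/and3P[bw bd bc] /andP[/andP[wd wc] /andP[dc _]]]].
  case/and4P => -> -> -> -> /=.
  by rewrite ac ad bc bd (eq_sym w a) (eq_sym w b) aw bw wc wd.
- case/and4P => ab cd /and4P[ac ad bc bd] /andP[/andP[bw /andP[/andP[wa wb] /andP[wc wd]]] dw].
  by rewrite ac ad bc bd wc wd (eq_sym a w) (eq_sym b w) wa wb (eq_sym d c)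
    (adj_neq ab) (adj_neq cd) ab bw dw cd.
Qed.

Lemma card_path5_labellings_edge_pairs : #|path5_labellings| =
  \sum_(e1 in edges adj) \sum_(e2 in edges adj | [disjoint e1 & e2]) pair_term adj e1 e2.
Proof.
transitivity (\sum_(e1 in edges adj) \sum_(x in e1) \sum_(e2 in edges adj) \sum_(y in e2)
   \sum_(w : T) ([disjoint e1 & e2] && (adj x w && (w \notin e1 :|: e2) && adj y w) : nat));
  last first.
  apply: eq_bigr => e1 _; rewrite big_mkcondr /= exchange_big /=; apply: eq_bigr => e2 _.
  rewrite pair_termE; case: [disjoint e1 & e2] => //=.
  by rewrite big1 // => x _; rewrite big1 // => y _; rewrite big1.
rewrite sum_edges_endpoints.
under [RHS]eq_bigr => a _ do under eq_bigr => b _ do rewrite sum_edges_endpoints.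
rewrite -sum1_card big_mkcond /= (sum_ffun5_bridged (fun f => (f \in path5_labellings) : nat)).
apply: eq_bigr => a _; apply: eq_bigr => b _; rewrite big_distrr; apply: eq_bigr => c _.
rewrite big_distrr /=; apply: eq_bigr => d _; rewrite mulnA big_distrr /=; apply: eq_bigr => w _.
by rewrite bridged_path_labellings !mulnb -!andbA.
Qed.

Lemma sum_disjoint_edge_pairs :
  \sum_(e1 in edges adj) \sum_(e2 in edges adj | [disjoint e1 & e2]) pair_term adj e1 e2 =
  2 * \sum_(q in Q adj) pair_term adj (fst_of q) (snd_of q).
Proof.
pose D := [set p : {set T} * {set T} |
  [&& p.1 \in edges adj, p.2 \in edges adj & [disjoint p.1 & p.2]]].
pose unordered (p : {set T} * {set T}) := [set p.1; p.2].
have unordered_D : unordered @: D = Q adj.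
  apply/setP => q; apply/imsetP/idP => [[[e1 e2]] | /mem_QP[e1 [e2 [e1E e2E dis ->]]]].
  - rewrite inE => /and3P[e1E e2E dis] ->; rewrite inE.
    by apply/existsP; exists e1; rewrite e1E; apply/existsP; exists e2; rewrite e2E dis eqxx.
  - by exists (e1, e2); rewrite // inE e1E e2E dis.
rewrite pair_big_dep (eq_bigl (fun p => p \in D)); last by move=> p; rewrite [_ \in D]inE.
rewrite (partition_big_imset unordered) unordered_D big_distrr /=.
apply: eq_bigr => q /mem_QP[e1 [e2 [e1E e2E dis ->]]].
have ne := edges_disjoint_neq e1E dis.
rewrite (eq_bigl (fun p => p \in [set (e1, e2); (e2, e1)])); last first.
  move=> [a b]; rewrite in_set2 inE /= !xpair_eqE /unordered /=; apply/idP/idP.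
  - by case/andP => _ /eqP /set2_eq [[-> ->] | [-> ->]]; rewrite !eqxx ?orbT.
  - case/orP => /andP[/eqP -> /eqP ->]; rewrite ?e1E ?e2E ?dis ?eqxx //=.
    by rewrite disjoint_sym dis setUC eqxx.
rewrite big_setU1 /= ?big_set1 ?in_set1 ?xpair_eqE ?(negbTE ne) // pair_termC addnn -mul2n.
by case: (fst_snd_of_set2 ne) => -[-> ->]; rewrite // pair_termC.
Qed.

End Graph.

Theorem proposition2 (T : finType) (adj : rel T)
  (adj_sym : symmetric adj) (adj_irr : irreflexive adj) :
  n_L5 adj = \sum_(q in Q adj) pair_term adj (fst_of q) (snd_of q).
Proof.
apply/eqP; rewrite -(eqn_pmul2l (isT : 0 < 2)); apply/eqP.
by rewrite -card_path5_labellings // card_path5_labellings_edge_pairs // sum_disjoint_edge_pairs.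
Qed.
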